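(* Let $f$ be a real-valued symmetric ternary tensor in $(\mathbb{C}^3)^{\otimes 3}$, and suppose there exist $\beta,\gamma\in\mathbb{C}^3$ with $\beta\neq 0$, $\langle\beta,\beta\rangle=0$, and a complex symmetric ternary tensor $f_\beta$ with $\langle f_\beta,\beta\rangle=0$, such that $$f=f_\beta+\beta^{\otimes 2}\otimes\gamma+\beta\otimes\gamma\otimes\beta+\gamma\otimes\beta^{\otimes 2}.$$ Then there exist a $3\times 3$ real orthogonal matrix $T$ and $\lambda\in\mathbb{R}$ such that $T^{\otimes 3}f=\lambda\, e_3^{\otimes 3}$. In particular, $f=\alpha^{\otimes 3}$ for some $\alpha\in\mathbb{R}^3$.
   Context: Ternary signatures on a 3-element domain are identified with tensors in $(\mathbb{C}^3)^{\otimes 3}$; symmetric means invariant under permutation of the arguments. For $u,v\in\mathbb{C}^n$, $\langle u,v\rangle=\sum_j u_jv_j$ (bilinear, no conjugation). For a symmetric tensor $g$ of arity $r\ge1$ and a vector $u$, $\langle g,u\rangle$ is the arity-$(r-1)$ tensor obtained by contracting one (any) index of $g$ with $u$, i.e. $\langle g,u\rangle_{j_2\dots j_r}=\sum_{j} g_{j j_2\dots j_r}u_j$. $e_3=(0,0,1)^T$. *)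

From HB Require Import structures.
From mathcomp Require Import all_boot all_order all_algebra.
From mathcomp Require Import complex.
Set Implicit Arguments. Unset Strict Implicit. Unset Printing Implicit Defensive.
Import Order.TTheory GRing.Theory Num.Theory.
Local Open Scope ring_scope.
Local Open Scope complex_scope.

Definition tensor3 (K : Type) := 'I_3 -> 'I_3 -> 'I_3 -> K.

(* Symmetric: invariant under all permutations of the arguments
   (generated by the two adjacent transpositions). *)
Definition symmetric3 (K : Type) (f : tensor3 K) : Prop :=
  forall i j k, f i j k = f j i k /\ f i j k = f i k j.

Definition bil (K : nzRingType) (u v : 'I_3 -> K) : K := \sum_(j < 3) u j * v j.

Definition contract3 (K : nzRingType) (g : tensor3 K) (u : 'I_3 -> K)
  : 'I_3 -> 'I_3 -> K := fun j2 j3 => \sum_(j < 3) g j j2 j3 * u j.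

Definition tprod3 (K : nzRingType) (a b c : 'I_3 -> K) : tensor3 K :=
  fun i j k => a i * b j * c k.

Definition orthogonal_mx (R : nzRingType) (T : 'M[R]_3) : Prop :=
  T *m T^T = 1%:M.

Definition act3 (R : rcfType) (T : 'M[R]_3) (f : tensor3 R[i]) : tensor3 R[i] :=
  fun a b c => \sum_(i < 3) \sum_(j < 3) \sum_(k < 3)
     (T a i)%:C * (T b j)%:C * (T c k)%:C * f i j k.

Definition e3 (K : nzRingType) : 'I_3 -> K := fun i => if val i == 2%N then 1 else 0.

From HB Require Import structures.
From mathcomp Require Import all_boot all_order all_algebra.
From mathcomp Require Import complex polyrcf.
From mathcomp Require Import ring lra.
Set Implicit Arguments. Unset Strict Implicit. Unset Printing Implicit Defensive.
Import Order.TTheory GRing.Theory Num.Theory.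
Local Open Scope ring_scope.
Local Open Scope complex_scope.

(* Put c := <gamma, beta>.  Since <f_beta, beta> = 0 and beta is
   isotropic, the decomposition of f gives <f, beta> = c beta (x) beta.  As f
   is real, also <f, conj beta> = conj c conj beta (x) conj beta, and computing
   the double contraction f(beta, conj beta, -) in both orders yields
   c beta N = conj c conj beta N with N = <beta, conj beta> > 0; pairing with
   conj beta and using <beta, beta> = 0 forces c = 0, i.e. <f, beta> = 0.
   Writing beta = a + i b, the vectors a, b are orthogonal of equal positive
   length and both annihilate the real tensor g = Re f.  Completing a, b (by
   their cross product) to an orthogonal frame T, the symmetric tensor g is
   killed by the first two rows of T in every slot, hence g = lam t^(x)3 with
   t the third row of T. *)

Definition o0 : 'I_3 := @Ordinal 3 0 isT.
Definition o1 : 'I_3 := @Ordinal 3 1 isT.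
Definition o2 : 'I_3 := @Ordinal 3 2 isT.

Lemma sum3 (K : nmodType) (F : 'I_3 -> K) : \sum_(i < 3) F i = F o0 + F o1 + F o2.
Proof.
rewrite !big_ord_recl big_ord0 addr0 addrA.
by congr (F _ + F _ + F _); apply: val_inj.
Qed.

Lemma ord3P (i : 'I_3) : [\/ i = o0, i = o1 | i = o2].
Proof.
case: i => [[|[|[|m]]] Hi] //.
- by apply: Or31; apply: val_inj.
- by apply: Or32; apply: val_inj.
- by apply: Or33; apply: val_inj.
Qed.

Section Bilinear.
Variable K : comNzRingType.
Implicit Types (u v : 'I_3 -> K).

Lemma bilC u v : bil u v = bil v u.
Proof. by apply: eq_bigr => l _; rewrite mulrC. Qed.

Lemma bil_exchange u v (F : 'I_3 -> 'I_3 -> K) :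
  bil u (fun j => bil v (fun l => F l j)) = bil v (fun l => bil u (F l)).
Proof.
rewrite /bil; under eq_bigr => j _ do rewrite mulr_sumr.
rewrite exchange_big; apply: eq_bigr => l _; rewrite mulr_sumr.
by apply: eq_bigr => j _; rewrite mulrCA.
Qed.

Lemma bil0r u (h : 'I_3 -> K) : (forall l, h l = 0) -> bil u h = 0.
Proof. by move=> h0; rewrite /bil big1 // => l _; rewrite h0 mulr0. Qed.

Lemma contract3_swap (f : tensor3 K) u v : symmetric3 f ->
  forall k, bil v (fun j => contract3 f u j k) = bil u (fun l => contract3 f v l k).
Proof.
move=> f_sym k; rewrite /bil /contract3.
under eq_bigr => j _ do rewrite mulr_sumr.
under [RHS]eq_bigr => l _ do rewrite mulr_sumr.
rewrite exchange_big; apply: eq_bigr => l _; apply: eq_bigr => j _.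
by rewrite (proj1 (f_sym l j k)); ring.
Qed.
End Bilinear.

Lemma contract3_decomposition (K : comNzRingType) (f fb : tensor3 K)
    (beta gamma : 'I_3 -> K) :
  bil beta beta = 0 -> (forall j k, contract3 fb beta j k = 0) ->
  (forall i j k, f i j k = fb i j k + tprod3 beta beta gamma i j k
                         + tprod3 beta gamma beta i j k + tprod3 gamma beta beta i j k) ->
  forall j k, contract3 f beta j k = bil gamma beta * beta j * beta k.
Proof.
move=> iso fb_beta f_dec j k.
have -> : contract3 f beta j k = contract3 fb beta j k
    + bil beta beta * (beta j * gamma k + gamma j * beta k) + bil gamma beta * beta j * beta k.
  by rewrite /contract3 /bil !sum3 !f_dec /tprod3; ring.
by rewrite fb_beta iso mul0r !add0r.
Qed.

Section IsotropicContraction.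
Variables (R : rcfType) (f : tensor3 R[i]).
Hypotheses (f_real : forall i j k, f i j k \is Num.real) (f_sym : symmetric3 f).

Lemma contract3_conj (u : 'I_3 -> R[i]) j k :
  contract3 f (fun l => (u l)^*) j k = (contract3 f u j k)^*.
Proof.
rewrite /contract3 rmorph_sum; apply: eq_bigr => l _.
by rewrite rmorphM /= -[in RHS](RRe_real (f_real l j k)) conjc_real RRe_real.
Qed.

Lemma herm_norm_neq0 (u : 'I_3 -> R[i]) :
  (exists j, u j != 0) -> bil u (fun l => (u l)^*) != 0.
Proof.
case=> j uj0; apply/negP => /eqP /psumr_eq0P u0.
have /eqP := u0 (fun l _ => mulcJ_ge0 (u l)) j isT.
by rewrite mulf_eq0 conjc_eq0 orbb (negPf uj0).
Qed.

Lemma isotropic_contraction0 (beta : 'I_3 -> R[i]) (c : R[i]) :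
  (exists j, beta j != 0) -> bil beta beta = 0 ->
  (forall j k, contract3 f beta j k = c * beta j * beta k) ->
  forall j k, contract3 f beta j k = 0.
Proof.
move=> beta_nz iso fbeta; suff c0 : c = 0 by move=> j k; rewrite fbeta c0 !mul0r.
pose betac l := (beta l)^*.
pose N := bil beta betac.
have fbetac j k : contract3 f betac j k = c^* * betac j * betac k.
  by rewrite contract3_conj fbeta !rmorphM.
(* both orders of the double contraction f(beta, conj beta, e_k) *)
have coefs k : c * beta k * N = c^* * betac k * N.
  have := contract3_swap beta betac f_sym k; rewrite /bil.
  under eq_bigr => j _ do rewrite fbeta.
  under [X in _ = X -> _]eq_bigr => l _ do rewrite fbetac.
  move=> E; rewrite /N /bil !mulr_sumr.
  transitivity (\sum_(j < 3) betac j * (c * beta j * beta k)).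
    by apply: eq_bigr => j _; ring.
  by rewrite E; apply: eq_bigr => l _; ring.
(* pairing with conj beta: the right side is conj <beta, beta> = 0 *)
have : c * N * bil beta betac = 0.
  transitivity (\sum_(k < 3) c * beta k * N * betac k).
    by rewrite [bil _ _]/bil mulr_sumr; apply: eq_bigr => k _; ring.
  under eq_bigr => k _ do rewrite coefs.
  transitivity (c^* * N * (bil beta beta)^*).
    by rewrite /bil rmorph_sum mulr_sumr; apply: eq_bigr => k _; rewrite rmorphM; ring.
  by rewrite iso rmorph0 mulr0.
by move/eqP; rewrite !mulf_eq0 /N -orbA orbb (negPf (herm_norm_neq0 beta_nz)) orbF => /eqP.
Qed.
End IsotropicContraction.

Lemma real_tensor_parts (R : rcfType) (f : tensor3 R[i]) :
  (forall i j k, f i j k \is Num.real) -> symmetric3 f ->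
  exists2 g : tensor3 R, symmetric3 g & forall i j k, f i j k = (g i j k)%:C.
Proof.
move=> f_real f_sym; exists (fun i j k => complex.Re (f i j k)).
  by move=> i j k; case: (f_sym i j k) => <- <-.
by move=> i j k; rewrite RRe_real.
Qed.

Section RealParts.
Variables (R : rcfType) (a b : 'I_3 -> R) (beta : 'I_3 -> R[i]).
Hypothesis beta_ab : forall l, beta l = a l +i* b l.

Lemma real_parts_annihilate (f : tensor3 R[i]) (g : tensor3 R) j k :
  (forall i j k, f i j k = (g i j k)%:C) -> contract3 f beta j k = 0 ->
  bil a (fun l => g l j k) = 0 /\ bil b (fun l => g l j k) = 0.
Proof.
move=> f_g; have -> : contract3 f beta j k
    = bil a (fun l => g l j k) +i* bil b (fun l => g l j k).
  rewrite /contract3 /bil !sum3 !f_g !beta_ab.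
  by apply/eqP; rewrite eq_complex /= !mul0r !subr0 !addr0 ![_ * g _ _ _]mulrC !eqxx.
by case.
Qed.

Lemma bil_complex_self :
  bil beta beta = (bil a a - bil b b) +i* (bil a b *+ 2).
Proof.
rewrite /bil !sum3 !beta_ab.
by apply/eqP; rewrite eq_complex /=; apply/andP; split; apply/eqP; ring.
Qed.

Lemma complex_vec_neq0 : (exists j, beta j != 0) -> 0 < bil a a + bil b b.
Proof.
case=> j; rewrite beta_ab => nz.
have pos : 0 < a j ^+ 2 + b j ^+ 2.
  rewrite lt_def addr_ge0 ?sqr_ge0 // andbT paddr_eq0 ?sqr_ge0 // !sqrf_eq0.
  by apply: contra nz => /andP [/eqP -> /eqP ->].
rewrite /bil !sum3; have := sqr_ge0 (a o0); have := sqr_ge0 (a o1).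
have := sqr_ge0 (a o2); have := sqr_ge0 (b o0); have := sqr_ge0 (b o1).
have := sqr_ge0 (b o2).
by case: (ord3P j) pos => -> pos; rewrite !expr2; lra.
Qed.

Lemma isotropic_real_parts : bil beta beta = 0 -> (exists j, beta j != 0) ->
  [/\ bil a a = bil b b, bil a b = 0 & 0 < bil a a].
Proof.
move=> iso /complex_vec_neq0 pos.
have [aa_bb ab0] : bil a a = bil b b /\ bil a b = 0.
  move: iso; rewrite bil_complex_self => -[/eqP + /eqP].
  by rewrite subr_eq0 mulrn_eq0 /= => /eqP -> /eqP.
by split=> //; move: pos; rewrite -aa_bb -mulr2n pmulrn_lgt0.
Qed.
End RealParts.

(* Completing two orthogonal vectors of length r to an orthogonal frame:
   rows a / r, b / r, (a x b) / r^2. *)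
Section Frame.
Variable K : fieldType.
Implicit Types (a b : 'I_3 -> K) (r : K).

Definition cross a b : 'I_3 -> K := fun l =>
  match val l with
  | 0 => a o1 * b o2 - a o2 * b o1
  | 1 => a o2 * b o0 - a o0 * b o2
  | _ => a o0 * b o1 - a o1 * b o0
  end.

Lemma bil_cross_l a b : bil a (cross a b) = 0.
Proof. by rewrite /bil sum3 /cross /=; ring. Qed.

Lemma bil_cross_r a b : bil b (cross a b) = 0.
Proof. by rewrite /bil sum3 /cross /=; ring. Qed.

Lemma lagrange_identity a b :
  bil (cross a b) (cross a b) = bil a a * bil b b - bil a b ^+ 2.
Proof. by rewrite /bil !sum3 /cross /=; ring. Qed.

Definition frame_row a b (i : 'I_3) : 'I_3 -> K :=
  match val i with 0 => a | 1 => b | _ => cross a b end.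

Definition frame_scale r (i : 'I_3) : K :=
  match val i with 0 => r | 1 => r | _ => r * r end.

Definition frame a b r : 'M[K]_3 :=
  \matrix_(i, j) (frame_row a b i j / frame_scale r i).

Lemma frame_row_bil a b h r (i : 'I_3) :
  bil (frame a b r i) h = bil (frame_row a b i) h / frame_scale r i.
Proof. by rewrite /bil mulr_suml; apply: eq_bigr => l _; rewrite mxE mulrAC. Qed.

Lemma frame_orthogonal a b r : r != 0 ->
  bil a a = r * r -> bil b b = r * r -> bil a b = 0 -> orthogonal_mx (frame a b r).
Proof.
move=> r0 aa bb ab; have rr0 : r * r != 0 by rewrite mulf_neq0.
apply/matrixP => i j; rewrite !mxE.
have -> : \sum_(l < 3) (frame a b r) i l * (frame a b r)^T l j
    = bil (frame_row a b i) (frame_row a b j) / (frame_scale r i * frame_scale r j).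
  by rewrite /bil mulr_suml; apply: eq_bigr => l _; rewrite !mxE invfM mulrACA.
have ba : bil b a = 0 by rewrite bilC.
have ca : bil (cross a b) a = 0 by rewrite bilC bil_cross_l.
have cb : bil (cross a b) b = 0 by rewrite bilC bil_cross_r.
case: (ord3P i) => ->; case: (ord3P j) => -> /=;
  rewrite ?aa ?bb ?ab ?ba ?ca ?cb ?bil_cross_l ?bil_cross_r ?lagrange_identity ?mul0r //.
- by rewrite divff.
- by rewrite divff.
- by rewrite aa bb ab expr0n subr0 divff // mulf_neq0.
Qed.
End Frame.

Lemma orthogonal_frame_extension (R : rcfType) (a b : 'I_3 -> R) :
  bil a a = bil b b -> bil a b = 0 -> 0 < bil a a ->
  exists T : 'M[R]_3, orthogonal_mx T /\ forall h : 'I_3 -> R,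
    bil a h = 0 -> bil b h = 0 -> bil (T o0) h = 0 /\ bil (T o1) h = 0.
Proof.
move=> aa_bb ab0 aa_gt0; pose r := Num.sqrt (bil a a).
have rr : r * r = bil a a by rewrite -expr2 sqr_sqrtr // ltW.
have r0 : r != 0 by rewrite gt_eqF // sqrtr_gt0.
exists (frame a b r); split; first by apply: frame_orthogonal; rewrite -?aa_bb.
by move=> h ah bh; rewrite !frame_row_bil /= ah bh !mul0r.
Qed.

Section RankOne.
Variables (K : comNzRingType) (T : 'M[K]_3).
Hypothesis T_orth : T^T *m T = 1%:M.

Lemma orth_complement_third_row (h : 'I_3 -> K) :
  bil (T o0) h = 0 -> bil (T o1) h = 0 -> forall i, h i = T o2 i * bil (T o2) h.
Proof.
move=> h0 h1 i.
transitivity (\sum_(l < 3) (T^T *m T) i l * h l).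
  rewrite T_orth (bigD1 i) //= mxE eqxx mul1r big1 ?addr0 // => l il.
  by rewrite mxE eq_sym (negPf il) mul0r.
under eq_bigr => l _ do rewrite mxE mulr_suml.
rewrite exchange_big /=.
under eq_bigr => m _ do under eq_bigr => l _ do rewrite !mxE -mulrA.
under eq_bigr => m _ do rewrite -mulr_sumr.
by move: h0 h1; rewrite /bil => h0 h1; rewrite sum3 h0 h1 !mulr0 !add0r.
Qed.

Lemma symmetric_rank_one (g : tensor3 K) : symmetric3 g ->
  (forall j k, bil (T o0) (fun l => g l j k) = 0 /\ bil (T o1) (fun l => g l j k) = 0) ->
  exists lam, forall i j k, g i j k = lam * (T o2 i * T o2 j * T o2 k).
Proof.
move=> g_sym g_ann; pose t := T o2.
pose G j k := bil t (fun l => g l j k).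
pose H k := bil t (fun j => G j k).
have G_sym j k : G j k = G k j.
  by apply: eq_bigr => l _; rewrite (proj2 (g_sym l j k)).
(* by symmetry, every annihilator of g passes to G and then to H *)
have G_ann u : (forall j k, bil u (fun l => g l j k) = 0) ->
    forall k, bil u (fun j => G j k) = 0.
  move=> u_ann k; rewrite bil_exchange; apply: bil0r => l.
  by rewrite -(u_ann l k); apply: eq_bigr => j _; rewrite (proj1 (g_sym l j k)).
have H_ann u : (forall j k, bil u (fun l => g l j k) = 0) -> bil u H = 0.
  move=> u_ann; rewrite bil_exchange; apply: bil0r => j.
  by rewrite -(G_ann u u_ann j); apply: eq_bigr => k _; rewrite G_sym.
have ann0 j k := proj1 (g_ann j k); have ann1 j k := proj2 (g_ann j k).
exists (bil t H) => i j k.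
rewrite (orth_complement_third_row (ann0 j k) (ann1 j k)) -/(G j k).
rewrite (orth_complement_third_row (G_ann _ ann0 k) (G_ann _ ann1 k)) -/(H k).
rewrite (orth_complement_third_row (H_ann _ ann0) (H_ann _ ann1)).
by rewrite /t; ring.
Qed.
End RankOne.

Lemma act3_rank_one (R : rcfType) (T : 'M[R]_3) (lam : R) (f : tensor3 R[i]) :
  orthogonal_mx T -> (forall i j k, f i j k = (lam * (T o2 i * T o2 j * T o2 k))%:C) ->
  forall a b c, act3 T f a b c = lam%:C * tprod3 (@e3 _) (@e3 _) (@e3 _) a b c.
Proof.
move=> T_orth f_eq a b c.
have row2 x : (bil (T x) (T o2))%:C = e3 R[i] x.
  have := congr1 (fun M : 'M[R]_3 => M x o2) T_orth; rewrite !mxE /bil.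
  under eq_bigr => l _ do rewrite mxE.
  by move=> ->; rewrite /e3; case: (ord3P x) => ->.
rewrite /act3 /tprod3 -!row2 /bil.
under eq_bigr => i _ do under eq_bigr => j _ do under eq_bigr => k _ do rewrite f_eq.
by rewrite !sum3 !rmorphD !rmorphM; ring.
Qed.

Lemma cube_root (R : rcfType) (x : R) : exists m : R, m ^+ 3 = x.
Proof.
have odd_size : ~~ odd (size ('X^3 - x%:P : {poly R})) by rewrite size_XnsubC.
have [m /rootP] := odd_poly_root odd_size.
by rewrite !hornerE => /eqP; rewrite subr_eq0 => /eqP; exists m.
Qed.

Lemma real_cube (R : rcfType) (t : 'I_3 -> R) (lam : R) (f : tensor3 R[i]) :
  (forall i j k, f i j k = (lam * (t i * t j * t k))%:C) ->
  exists alpha : 'I_3 -> R, forall i j k,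
    f i j k = tprod3 (fun l => (alpha l)%:C) (fun l => (alpha l)%:C)
                     (fun l => (alpha l)%:C) i j k.
Proof.
move=> f_eq; have [m m3] := cube_root lam.
exists (fun l => m * t l) => i j k.
by rewrite f_eq /tprod3 -!rmorphM -m3; congr (_ %:C); ring.
Qed.

Theorem mainTheorem4 (R : rcfType) (f : tensor3 R[i])
  (f_real : forall i j k, f i j k \is Num.real)
  (f_sym : symmetric3 f)
  (beta gamma : 'I_3 -> R[i]) (fb : tensor3 R[i])
  (beta_nz : exists j, beta j != 0)
  (beta_iso : bil beta beta = 0)
  (fb_sym : symmetric3 fb)
  (fb_beta : forall j2 j3, contract3 fb beta j2 j3 = 0)
  (f_dec : forall i j k,
     f i j k = fb i j k + tprod3 beta beta gamma i j k
             + tprod3 beta gamma beta i j k + tprod3 gamma beta beta i j k) :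
  (exists (T : 'M[R]_3) (lam : R), orthogonal_mx T /\
     forall a b c, act3 T f a b c = lam%:C * tprod3 (@e3 _) (@e3 _) (@e3 _) a b c)
  /\ (exists alpha : 'I_3 -> R, forall i j k,
        f i j k = tprod3 (fun t => (alpha t)%:C) (fun t => (alpha t)%:C)
                         (fun t => (alpha t)%:C) i j k).
Proof.
have f_beta0 := isotropic_contraction0 f_real f_sym beta_nz beta_iso
  (contract3_decomposition beta_iso fb_beta f_dec).
have [g g_sym f_g] := real_tensor_parts f_real f_sym.
pose a l := complex.Re (beta l); pose b l := complex.Im (beta l).
have beta_ab l : beta l = a l +i* b l by rewrite /a /b; case: (beta l).
have [aa_bb ab0 aa_gt0] := isotropic_real_parts beta_ab beta_iso beta_nz.
have [T [T_orth T_ann]] := orthogonal_frame_extension aa_bb ab0 aa_gt0.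
have [lam g_eq] : exists lam, forall i j k, g i j k = lam * (T o2 i * T o2 j * T o2 k).
  apply: symmetric_rank_one => //; first exact: mulmx1C.
  move=> j k; have [ga gb] := real_parts_annihilate beta_ab f_g (f_beta0 j k).
  exact: T_ann.
have f_eq i j k : f i j k = (lam * (T o2 i * T o2 j * T o2 k))%:C by rewrite f_g g_eq.
split; first by exists T, lam; split; last exact: act3_rank_one.
exact: real_cube f_eq.
Qed.
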